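(* Let $F$ be an infinite field of characteristic $p>2$ and $k$ a positive integer. Let $l_1,\dots,l_k\in\mathbb{N}_0$ and let $x^i_1,\dots,x^i_{l_i}$ ($i=1,\dots,k$) be distinct variables, $x^i_t$ of degree $i$. Consider the graded monomial $T=(x^1_1)^{r^1_1}\cdots(x^1_{l_1})^{r^1_{l_1}}\cdots(x^k_1)^{r^k_1}\cdots(x^k_{l_k})^{r^k_{l_k}}$ with non-negative integer exponents satisfying $\sum_{i=1}^k i\,(r^i_1+\cdots+r^i_{l_i})\le k$. Let $r=\max\{r^i_t\}$ and suppose $p>r$. Then $T$ is not a $\mathbb{Z}$-graded identity of $E^{k^\ast}$.
   Context: $L$ is a vector space over $F$ with basis $e_1,e_2,\dots$, $E$ its unital Grassmann algebra (basis $1$ and $e_{i_1}\cdots e_{i_k}$, $i_1<\cdots<i_k$, with $e_ie_j=-e_je_i$). $E^{k^\ast}$ is $E$ with the $\mathbb{Z}$-grading induced by $\|e_i\|=1$ for $i\le k$, $\|e_i\|=0$ for $i>k$ (basis monomials get the sum of degrees of their factors; $1$ has degree $0$). A graded polynomial is a graded identity of $A$ if it vanishes whenever each variable is replaced by an element of the homogeneous component of $A$ of that variable's degree. *)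

From HB Require Import structures.
From mathcomp Require Import all_boot all_order all_algebra.
From mathcomp Require Import finmap.
Set Implicit Arguments. Unset Strict Implicit. Unset Printing Implicit Defensive.
Import Order.TTheory GRing.Theory Num.Theory.
Local Open Scope fset_scope.
Local Open Scope ring_scope.

(* Unital Grassmann algebra E over F on generators e_1, e_2, ...
   Convention: generator e_(j+1) is indexed by j : nat (0-based).
   A basis monomial e_{i_1}...e_{i_m} (i_1<...<i_m) is indexed by the finite
   set {i_1-1,...,i_m-1} : {fset nat}; 1 is indexed by fset0.
   An element of E is its coefficient function (with finite support, see
   [grass_fin]). *)
Definition grass (F : fieldType) := {fset nat} -> F.

(* number of inversions between A and B: #{(a,b) in A x B | a > b};
   e_A * e_B = (-1)^(inv_count A B) e_(A u B) when A, B disjoint. *)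
Definition inv_count (A B : {fset nat}) : nat :=
  (\sum_(a <- A) \sum_(b <- B) (b < a))%N.

Definition grass_mul (F : fieldType) (x y : grass F) : grass F :=
  fun S => \sum_(A <- fpowerset S)
     (-1) ^+ inv_count A (S `\` A) * x A * y (S `\` A).

Definition grass_one (F : fieldType) : grass F :=
  fun S => if S == fset0 then 1 else 0.

Definition grass_zero (F : fieldType) : grass F := fun _ => 0.

(* finitely supported coefficient functions = genuine elements of E *)
Definition grass_fin (F : fieldType) (x : grass F) : Prop :=
  exists s : seq {fset nat}, forall S, x S != 0 -> S \in s.

(* Z-grading of E^{k*}: ||e_j|| = 1 for j <= k, 0 for j > k;
   with 0-based indices: index j has degree 1 iff j < k. *)
Definition kdeg (k : nat) (S : {fset nat}) : nat :=
  #|` [fset j in S | (j < k)%N] |.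

Definition grass_hom (F : fieldType) (k d : nat) (x : grass F) : Prop :=
  grass_fin x /\ forall S, x S != 0 -> kdeg k S = d.

Definition grass_prod (F : fieldType) (xs : seq (grass F)) : grass F :=
  foldr (@grass_mul F) (@grass_one F) xs.

(* Value of the monomial
   T = (x^1_1)^{r^1_1} ... (x^1_{l_1})^{r^1_{l_1}} ... (x^k_1)^{r^k_1} ... (x^k_{l_k})^{r^k_{l_k}}
   under the substitution x^i_{t+1} := v i t  (t 0-based, 1 <= i <= k). *)
Definition eval_monomial (F : fieldType) (k : nat) (l : nat -> nat)
    (r : nat -> nat -> nat) (v : nat -> nat -> grass F) : grass F :=
  grass_prod (flatten [seq flatten [seq nseq (r i t) (v i t) | t <- iota 0 (l i)]
                      | i <- iota 1 k]).

From HB Require Import structures.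
From mathcomp Require Import all_boot all_order all_algebra.
From mathcomp Require Import finmap zify.
Import Order.TTheory GRing.Theory Num.Theory.
Set Implicit Arguments. Unset Strict Implicit. Unset Printing Implicit Defensive.
Local Open Scope fset_scope.
Local Open Scope nat_scope.

(* Substitute for x^i_t the sum of the basis monomials e_B of r^i_t pairwise
   disjoint "blocks" B, one block per occurrence of x^i_t in T.  A block for a
   variable of degree i consists of i generators of degree 1, taken from
   disjoint segments below k (possible as T has total degree at most k), and
   their mirror images x |-> 2k - x, of degree 0.  These even blocks make e_B
   central with e_B^2 = 0, so T evaluates to (prod r^i_t!) e_U, U the union of
   all blocks, which is nonzero as r^i_t < p.  Since [grass_mul] is given on
   coefficients only, the coefficient at U is computed by induction along the
   word of T; the mirroring makes every inversion count between two blocks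
   even, so no signs appear. *)

(* [mfact s] is the product of the factorials of the multiplicities in [s]. *)
Fixpoint mfact (T : eqType) (s : seq T) : nat :=
  if s is x :: s' then count_mem x s * mfact s' else 1.

Lemma prime_ndvd_mfact (T : eqType) p (s : seq T) : prime p ->
  {in s, forall x, count_mem x s < p} -> ~~ (p %| mfact s).
Proof.
move=> p_pr; elim: s => [|x s IHs] cnt_lt /=.
  by rewrite dvdn1; apply: contraTneq (prime_gt1 p_pr) => ->.
rewrite Euclid_dvdM // gtnNdvd ?cnt_lt ?mem_head //= ?eqxx //.
apply: IHs => y ys; apply: leq_ltn_trans (cnt_lt y _); last by rewrite inE ys orbT.
by rewrite /= leq_addl.
Qed.

Definition seq_inv (u w : seq nat) : nat := \sum_(x <- u) \sum_(y <- w) (y < x).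

Lemma seq_inv_catl u1 u2 w : seq_inv (u1 ++ u2) w = seq_inv u1 w + seq_inv u2 w.
Proof. by rewrite /seq_inv big_cat. Qed.

Lemma seq_inv_catr u w1 w2 : seq_inv u (w1 ++ w2) = seq_inv u w1 + seq_inv u w2.
Proof. by rewrite /seq_inv -big_split; apply: eq_bigr => x _; rewrite big_cat. Qed.

Lemma seq_inv_lt u w : {in u & w, forall x y, x < y} -> seq_inv u w = 0.
Proof.
move=> lt_uw; rewrite /seq_inv big_seq big1 // => x xu.
by rewrite big_seq big1 // => y yw; rewrite ltnNge ltnW // lt_uw.
Qed.

Lemma seq_inv_gt u w : {in u & w, forall x y, y < x} -> seq_inv u w = size u * size w.
Proof.
move=> gt_uw; rewrite /seq_inv -sum1_size big_distrl /=.
apply: eq_big_seq => x xu; rewrite mul1n -sum1_size.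
by apply: eq_big_seq => y yw; rewrite gt_uw.
Qed.

Lemma seq_inv_add_swap u w : {in u & w, forall x y, x != y} ->
  seq_inv u w + seq_inv w u = size u * size w.
Proof.
move=> neq_uw; rewrite /seq_inv [X in _ + X]exchange_big -big_split /=.
rewrite -sum1_size big_distrl /=; apply: eq_big_seq => x xu.
rewrite -big_split mul1n -sum1_size; apply: eq_big_seq => y yw /=.
by have := neq_uw x y xu yw; case: ltngtP.
Qed.

Lemma seq_inv_map_anti (f : nat -> nat) u w :
  {in w & u, forall y x, (f y < f x) = (x < y)} ->
  seq_inv (map f u) (map f w) = seq_inv w u.
Proof.
move=> f_anti; rewrite /seq_inv exchange_big big_map; apply: eq_big_seq => y yw.
by rewrite big_map; apply: eq_big_seq => x xu; rewrite f_anti.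
Qed.

Lemma inv_count_seq_fset u w : uniq u -> uniq w ->
  inv_count (seq_fset tt u) (seq_fset tt w) = seq_inv u w.
Proof.
move=> u_uniq w_uniq; rewrite /inv_count (perm_big _ (seq_fset_perm tt u)) undup_id //.
by apply: eq_bigr => x _; rewrite (perm_big _ (seq_fset_perm tt w)) undup_id.
Qed.

Section Mirror.
Variable k : nat.

Definition mirror x := k.*2 - x.

Definition mirror_fset (u : seq nat) : {fset nat} := seq_fset tt (u ++ map mirror u).

Lemma mem_mirror_fset u x : (x \in mirror_fset u) = (x \in u) || (x \in map mirror u).
Proof. by rewrite seq_fsetE mem_cat. Qed.

Lemma mirror_cat_uniq u : {in u, forall x, x < k} -> uniq u -> uniq (u ++ map mirror u).
Proof.
move=> u_lt u_uniq; rewrite cat_uniq map_inj_in_uniq; last first.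
  by move=> x y /u_lt ? /u_lt ?; rewrite /mirror; lia.
rewrite u_uniq andbT /=; apply/hasPn => _ /mapP[x xu ->]; apply/negP => /u_lt.
by have := u_lt _ xu; rewrite /mirror; lia.
Qed.

Lemma kdeg_mirror_fset u : {in u, forall x, x < k} -> uniq u ->
  kdeg k (mirror_fset u) = size u.
Proof.
move=> u_lt u_uniq; rewrite /kdeg -[in RHS](undup_id u_uniq) -(size_seq_fset tt).
congr #|` _ |; apply/fsetP => x.
have -> : (x \in [fset j in mirror_fset u | j < k]) = (x \in mirror_fset u) && (x < k).
  by rewrite inE.
rewrite mem_mirror_fset seq_fsetE; case xu: (x \in u); first by rewrite (u_lt _ xu).
by apply/negP => /andP[/mapP[y /u_lt ? ->]]; rewrite /mirror; lia.
Qed.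

Variables u w : seq nat.
Hypotheses (u_lt : {in u, forall x, x < k}) (w_lt : {in w, forall x, x < k}).
Hypothesis neq_uw : {in u & w, forall x y, x != y}.

Lemma mirror_fset_disjoint : [disjoint mirror_fset u & mirror_fset w].
Proof.
apply/fdisjointP => x; rewrite !mem_mirror_fset.
case/orP => [xu | /mapP[y yu ->]]; apply/negP; case/orP => [xw | /mapP[z zw]].
- by have := neq_uw xu xw; rewrite eqxx.
- by have := u_lt xu; have := w_lt zw; rewrite /mirror; lia.
- by have := w_lt xw; have := u_lt yu; rewrite /mirror; lia.
- move=> e; have := neq_uw yu zw.
  by have := u_lt yu; have := w_lt zw; move: e; rewrite /mirror; lia.
Qed.

(* Mirroring reverses the order, so the inversions between the mirrored halves
   complement those between [u] and [w]: every pair is counted twice. *)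
Lemma inv_count_mirror_fset_even : uniq u -> uniq w ->
  ~~ odd (inv_count (mirror_fset u) (mirror_fset w)).
Proof.
move=> u_uniq w_uniq.
rewrite inv_count_seq_fset ?mirror_cat_uniq // !seq_inv_catl !seq_inv_catr.
rewrite (@seq_inv_lt u (map mirror w)); last first.
  by move=> x _ /u_lt ? /mapP[y /w_lt ? ->]; rewrite /mirror; lia.
rewrite (@seq_inv_gt (map mirror u) w) ?size_map; last first.
  by move=> _ y /mapP[x /u_lt ? ->] /w_lt ?; rewrite /mirror; lia.
rewrite seq_inv_map_anti; last by move=> y x /w_lt ? /u_lt ?; rewrite /mirror; lia.
by rewrite addn0 addnCA seq_inv_add_swap // addnn odd_double.
Qed.

End Mirror.

Section BlockProducts.
Variables (F : fieldType) (T : eqType) (N : nat) (lab : nat -> T) (B : nat -> {fset nat}).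
Hypothesis B_neq0 : forall a, a < N -> B a != fset0.
Hypothesis B_disjoint : forall a b, a < N -> b < N -> a != b -> [disjoint B a & B b].
Hypothesis B_inv_even :
  forall a b, a < N -> b < N -> a != b -> ~~ odd (inv_count (B a) (B b)).

Definition block_sum (g : T) : grass F :=
  fun S => (\sum_(a <- iota 0 N | lab a == g) (S == B a)%:R)%R.

Definition blocks (V : {fset nat}) : seq nat := [seq a <- iota 0 N | B a `<=` V].

Definition tiled (V : {fset nat}) : bool := V `<=` \bigcup_(a <- blocks V) B a.

Definition tiling (V : {fset nat}) (s : seq T) : bool :=
  tiled V && perm_eq (map lab (blocks V)) s.

Lemma mem_blocks V a : (a \in blocks V) = (a < N) && (B a `<=` V).
Proof. by rewrite mem_filter mem_iota andbC. Qed.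

Lemma blocks_uniq V : uniq (blocks V).
Proof. exact/filter_uniq/iota_uniq. Qed.

Lemma tiledP V : reflect (forall x, x \in V -> exists2 a, a \in blocks V & x \in B a) (tiled V).
Proof.
apply: (iffP idP) => [/fsubsetP tV x /tV /bigfcupP[a /andP[aV _] xa] | tV].
  by exists a.
by apply/fsubsetP => x /tV[a aV xa]; apply/bigfcupP; exists a; rewrite ?aV.
Qed.

Lemma grass_mul_block_sum g (P : grass F) S :
  grass_mul (block_sum g) P S =
  (\sum_(a <- blocks S | lab a == g) (-1) ^+ inv_count (B a) (S `\` B a) * P (S `\` B a))%R.
Proof.
rewrite /grass_mul /block_sum /=.
under eq_bigr => A _ do rewrite mulr_sumr mulr_suml.
rewrite exchange_big /= big_filter_cond [RHS]big_mkcondl /=; apply: eq_bigr => a _.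
case: ifP => BaS.
  rewrite (bigD1_seq (B a)) ?fset_uniq ?fpowersetE //= eqxx mulr1 big1 ?addr0 //.
  by move=> A /negbTE ->; rewrite mulr0 mul0r.
rewrite big_seq big1 // => A; rewrite fpowersetE => AS.
by case: eqP => [eA|_]; [rewrite -eA AS in BaS | rewrite mulr0 mul0r].
Qed.

Lemma blocks_fsetD V a : a \in blocks V ->
  blocks (V `\` B a) = [seq b <- blocks V | b != a].
Proof.
rewrite mem_blocks => /andP[aN BaV]; rewrite -filter_predI; apply: eq_in_filter => b.
rewrite mem_iota /= => bN; rewrite fsubsetD.
have [-> | ba] := eqVneq b a; last by rewrite B_disjoint ?andbT.
by rewrite -fsetI_eq0 fsetIid (negbTE (B_neq0 aN)) andbF.
Qed.

Lemma tiled_fsetD V a : a \in blocks V -> tiled (V `\` B a) = tiled V.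
Proof.
move=> aV; apply/tiledP/tiledP => tV x xV.
  case xa: (x \in B a); first by exists a.
  have /tV[b] : x \in V `\` B a by rewrite in_fsetD xa.
  by rewrite blocks_fsetD // mem_filter => /andP[_ bV] xb; exists b.
move: xV; rewrite in_fsetD => /andP[xa /tV[b bV xb]].
by exists b; rewrite // blocks_fsetD // mem_filter bV andbT; apply: contraNneq xa => <-.
Qed.

Lemma tiling_fsetD V a s : a \in blocks V ->
  tiling (V `\` B a) s = tiling V (lab a :: s).
Proof.
move=> aV; rewrite /tiling tiled_fsetD // blocks_fsetD // -rem_filter ?blocks_uniq //.
by rewrite (permPl (perm_map lab (perm_to_rem aV))) /= perm_cons.
Qed.

Lemma tiling_nil V : tiling V [::] = (V == fset0).
Proof.
apply/idP/eqP => [/andP[tV /perm_nilP /(congr1 size)] | ->].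
  rewrite size_map => /size0nil b0; apply/eqP; rewrite -fsubset0.
  by move: tV; rewrite /tiled b0 big_nil.
rewrite /tiling /tiled fsub0set /=.
suff -> : blocks fset0 = [::] by [].
rewrite /blocks (@eq_in_filter _ _ pred0) ?filter_pred0 // => a.
by rewrite mem_iota fsubset0 => /= aN; apply/negbTE/B_neq0.
Qed.

Lemma sum_tiled V (f : nat -> nat) : tiled V ->
  \sum_(y <- V) f y = \sum_(a <- blocks V) \sum_(y <- B a) f y.
Proof.
move=> /tiledP tV.
transitivity (\sum_(a <- blocks V) \sum_(y <- V | y \in B a) f y); last first.
  apply: eq_big_seq => a; rewrite mem_blocks => /andP[_ BaV].
  rewrite big_fset_condE; apply: eq_fbigl => y.
  by rewrite !inE /= andb_idl // => /(fsubsetP BaV).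
rewrite (exchange_big_dep xpredT) //=; apply: eq_big_seq => y /tV[a aV ya].
rewrite big_mkcond (bigD1_seq a) ?blocks_uniq //= ya big1_seq ?addn0 // => b /andP[ba bV].
case: ifP => // yb; exfalso; move: aV bV; rewrite !mem_blocks => /andP[aN _] /andP[bN _].
by have /fdisjointP/(_ y yb) := B_disjoint bN aN ba; rewrite ya.
Qed.

Lemma inv_count_tiled A V : tiled V ->
  inv_count A V = \sum_(b <- blocks V) inv_count A (B b).
Proof.
move=> tV; rewrite /inv_count exchange_big sum_tiled //.
by apply: eq_bigr => b _; rewrite exchange_big.
Qed.

Lemma inv_count_block_even V a : a \in blocks V -> tiled V ->
  ~~ odd (inv_count (B a) (V `\` B a)).
Proof.
move=> aV tV; rewrite inv_count_tiled ?tiled_fsetD // -dvdn2 big_seq.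
apply: dvdn_sum => b; rewrite blocks_fsetD // mem_filter => /andP[ba bV].
move: aV bV; rewrite !mem_blocks dvdn2 => /andP[aN _] /andP[bN _].
by rewrite B_inv_even // eq_sym.
Qed.

Lemma grass_prod_block_sumE s V :
  grass_prod (map block_sum s) V = ((if tiling V s then mfact s else 0)%:R)%R.
Proof.
elim: s V => [|g s IHs] V /=; first by rewrite tiling_nil /grass_one; case: eqP.
rewrite grass_mul_block_sum.
transitivity (\sum_(a <- blocks V | lab a == g)
                (if tiling V (g :: s) then mfact s else 0)%:R : F)%R.
  rewrite big_seq_cond [RHS]big_seq_cond; apply: eq_bigr => a /andP[aV /eqP <-].
  rewrite IHs tiling_fsetD //; case: ifP => [/andP[tV _] | _]; last by rewrite mulr0.
  by rewrite -signr_odd (negbTE (inv_count_block_even aV tV)) mul1r.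
case: ifP => [/andP[_ /permP labV] | _]; last by rewrite big1.
rewrite big_const_seq iter_addr_0 -mulrnA mulnC -(count_map lab (pred1 g)) labV /=.
by rewrite eqxx.
Qed.

Lemma block_sum_neq0 g S : block_sum g S != 0%R ->
  exists2 a, a < N & lab a = g /\ S = B a.
Proof.
move=> nz; pose is_a a := (lab a == g) && (S == B a).
have [/hasP[a] | /hasPn none] := boolP (has is_a (iota 0 N)).
  by rewrite mem_iota => aN /andP[/eqP la /eqP eS]; exists a.
move: nz; rewrite /block_sum big_seq_cond big1 ?eqxx // => a /andP[aN la].
by have := none a aN; rewrite /is_a la /= => /negbTE ->.
Qed.

Lemma grass_hom_block_sum k e g :
  (forall a, a < N -> lab a = g -> kdeg k (B a) = e) -> grass_hom k e (block_sum g).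
Proof.
move=> kdegB; split => [|S /block_sum_neq0[a aN [la ->]]]; last exact: kdegB.
exists (map B (iota 0 N)) => S /block_sum_neq0[a aN [_ ->]].
by rewrite map_f // mem_iota.
Qed.

Lemma tiling_bigcup : tiling (\bigcup_(a <- iota 0 N) B a) (map lab (iota 0 N)).
Proof.
rewrite /tiling /tiled.
have -> : blocks (\bigcup_(a <- iota 0 N) B a) = iota 0 N.
  by apply/all_filterP/allP => a aN; apply: bigfcup_sup.
by rewrite fsubset_refl perm_refl.
Qed.

End BlockProducts.

Section SegmentBlocks.
Variables (k : nat) (d : nat -> nat).

Definition offset a := \sum_(0 <= b < a) d b.

Definition segment a := iota (offset a) (d a).

Definition segment_block a : {fset nat} := mirror_fset k (segment a).

Lemma offset_leq a b : a < b -> offset a + d a <= offset b.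
Proof.
move=> ab; rewrite /offset (@big_cat_nat _ _ _ a.+1 0 b) //=.
by rewrite big_nat_recr //= leq_addr.
Qed.

Lemma segment_disjoint a b : a != b -> {in segment a & segment b, forall x y, x != y}.
Proof.
move=> ab x y; rewrite !mem_iota.
by have := @offset_leq a b; have := @offset_leq b a; move: ab; rewrite neq_ltn; lia.
Qed.

Variable N : nat.
Hypothesis offset_N : offset N <= k.

Lemma segment_lt a : a < N -> {in segment a, forall x, x < k}.
Proof.
move=> aN x; rewrite mem_iota => /andP[_ xlt].
by apply: leq_trans xlt (leq_trans (offset_leq aN) offset_N).
Qed.

Lemma segment_block_disjoint a b : a < N -> b < N -> a != b ->
  [disjoint segment_block a & segment_block b].
Proof.
by move=> aN bN ab; apply: mirror_fset_disjoint; [apply: segment_lt.. | apply: segment_disjoint].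
Qed.

Lemma segment_block_inv_even a b : a < N -> b < N -> a != b ->
  ~~ odd (inv_count (segment_block a) (segment_block b)).
Proof.
move=> aN bN ab; apply: inv_count_mirror_fset_even; rewrite ?iota_uniq //.
- exact: segment_lt.
- exact: segment_lt.
- exact: segment_disjoint.
Qed.

Lemma segment_block_neq0 a : 0 < d a -> segment_block a != fset0.
Proof.
move=> da; apply/fset0Pn; exists (offset a).
by rewrite mem_mirror_fset mem_iota leqnn -{1}[offset a]addn0 ltn_add2l da.
Qed.

Lemma kdeg_segment_block a : a < N -> kdeg k (segment_block a) = d a.
Proof. by move=> aN; rewrite kdeg_mirror_fset ?iota_uniq ?size_iota //; apply: segment_lt. Qed.

End SegmentBlocks.

Definition monomial_word k (l : nat -> nat) (r : nat -> nat -> nat) : seq (nat * nat) :=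
  flatten [seq flatten [seq nseq (r i t) (i, t) | t <- iota 0 (l i)] | i <- iota 1 k].

Lemma eval_monomialE (F : fieldType) k l r (v : nat -> nat -> grass F) :
  eval_monomial k l r v = grass_prod [seq v h.1 h.2 | h <- monomial_word k l r].
Proof.
rewrite /eval_monomial /monomial_word map_flatten -map_comp.
congr (grass_prod (flatten _)); apply: eq_map => i /=.
by rewrite map_flatten -map_comp; congr flatten; apply: eq_map => t /=; rewrite map_nseq.
Qed.

Section MonomialWord.
Variables (k : nat) (l : nat -> nat) (r : nat -> nat -> nat).

Lemma mem_monomial_word h : h \in monomial_word k l r -> 0 < h.1 <= k /\ h.2 < l h.1.
Proof.
case/flattenP => _ /mapP[i ik ->] /flattenP[_ /mapP[t tl ->]] /nseqP[-> _].
by move: ik tl; rewrite !mem_iota /=; lia.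
Qed.

Lemma count_monomial_word i t : 0 < i <= k -> t < l i ->
  count_mem (i, t) (monomial_word k l r) = r i t.
Proof.
move=> ik tl; have i_k : i \in iota 1 k by rewrite mem_iota; lia.
have t_l : t \in iota 0 (l i) by rewrite mem_iota.
rewrite count_flatten sumnE !big_map (bigD1_seq i) ?iota_uniq //=.
rewrite big1_seq ?addn0 => [|j /andP[ji _]]; last first.
  rewrite count_flatten sumnE !big_map big1 // => s _.
  by rewrite count_nseq /= xpair_eqE (negbTE ji).
rewrite count_flatten sumnE !big_map (bigD1_seq t) ?iota_uniq //=.
rewrite count_nseq /= eqxx mul1n big1_seq ?addn0 // => s /andP[st _].
by rewrite count_nseq /= xpair_eqE eqxx (negbTE st).
Qed.

Lemma sum_monomial_word :
  \sum_(h <- monomial_word k l r) h.1 = \sum_(1 <= i < k.+1) i * \sum_(0 <= t < l i) r i t.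
Proof.
rewrite big_flatten big_map /index_iota subSS subn0; apply: eq_bigr => i _.
rewrite big_flatten big_map big_distrr subn0; apply: eq_bigr => t _.
by rewrite big_nseq iter_addn_0.
Qed.

End MonomialWord.

Unset Implicit Arguments.
Local Open Scope ring_scope.

Theorem mainTheorem7 (F : fieldType) (p : nat)
  (F_infinite : forall s : seq F, exists x : F, x \notin s)
  (charF : p \in [pchar F]) (p_gt2 : (2 < p)%N)
  (k : nat) (k_gt0 : (0 < k)%N)
  (l : nat -> nat) (r : nat -> nat -> nat)
  (hdeg : (\sum_(1 <= i < k.+1) i * \sum_(0 <= t < l i) r i t <= k)%N)
  (hp : forall i t, (1 <= i <= k)%N -> (t < l i)%N -> (r i t < p)%N) :
  exists v : nat -> nat -> grass F,
    (forall i t, (1 <= i <= k)%N -> (t < l i)%N -> grass_hom k i (v i t)) /\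
    eval_monomial k l r v <> grass_zero F.
Proof.
pose w := monomial_word k l r; pose N := size w.
pose lab a := nth (0, 0)%N w a; pose d a := (lab a).1; pose B := segment_block k d.
have d_gt0 a : (a < N)%N -> (0 < d a)%N.
  by move=> aN; have [/andP[]] := mem_monomial_word (mem_nth (0, 0)%N aN).
have offset_N : (offset d N <= k)%N.
  by move: hdeg; rewrite -sum_monomial_word (big_nth (0, 0)%N).
exists (fun i t => block_sum F N lab B (i, t)); split.
  move=> i t _ _; apply: grass_hom_block_sum => a aN lab_a.
  by rewrite (kdeg_segment_block offset_N aN) /d lab_a.
rewrite eval_monomialE.
have -> : [seq block_sum F N lab B (h.1, h.2) | h <- w] = map (block_sum F N lab B) w.
  by apply: eq_map => -[].
move=> /(congr1 (fun x => x (\bigcup_(a <- iota 0 N) B a))).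
have B_neq0 a : (a < N)%N -> B a != fset0 by move/d_gt0; apply: segment_block_neq0.
have lab_w : map lab (iota 0 N) = w := mkseq_nth (0, 0)%N w.
rewrite (grass_prod_block_sumE F lab B_neq0 (segment_block_disjoint offset_N)
          (segment_block_inv_even offset_N)).
rewrite -{1}lab_w tiling_bigcup /grass_zero; apply/eqP.
rewrite -(dvdn_pcharf charF); apply: prime_ndvd_mfact (pcharf_prime charF) _ => -[i t] itw.
by have [ik tl] := mem_monomial_word itw; rewrite count_monomial_word // hp.
Qed.
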